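(* Let $R$ be a partially ordered commutative ring. Then $\mathrm{O}_{q<\infty}\cap\mathrm{O}_{s<\infty}=\mathrm{O}_{qs<\infty}$ for all $q,s\in\mathrm{Loc}(R)$, and $\mathrm{O}_{1<\infty}=\mathcal{K}(R)$; hence $\mathcal{D}_{\mathrm{loc}}(R)=\{\mathrm{O}_{s<\infty}:s\in\mathrm{Loc}(R)\}$ is an admissible set of domains on $\mathcal{K}(R)$.
   Context: Rings are commutative with unit; ring morphisms are unital. A partially ordered commutative ring is a commutative ring $R$ with partial order $\le$, $r\le s\Rightarrow r+t\le s+t$, positive cone $R^+$ closed under multiplication and containing all squares. $\mathbb{N}_0=\{0,1,2,\dots\}$. $\mathrm{Loc}(R)$ is the set of $s\in1+R^+$ such that $rs\in R^+$ implies $r\in R^+$ for all $r\in R$ (it is closed under multiplication). $R_{\mathrm{loc}}$: fractions $r/s$ ($r\in R$, $s\in\mathrm{Loc}(R)$), $r/s=r'/s'$ iff $rs'=r's$, ordered by $p/q\le r/s$ iff $ps\le rq$. $R^{\mathrm{bd}}_{\mathrm{loc}}=\{a:\exists n\in\mathbb{N}_0,\ -n\le a\le n\}$. $\mathcal{K}(R)$: ring morphisms $\varphi\colon R^{\mathrm{bd}}_{\mathrm{loc}}\to\mathbb{R}$ with $\varphi(a)\ge0$ for $a\ge0$, with the weak-$*$ topology (generated by $\{\varphi:\varphi(a)\in V\}$, $V\subseteq\mathbb{R}$ open). For $s\in\mathrm{Loc}(R)$, $\mathrm{O}_{s<\infty}=\{\varphi\in\mathcal{K}(R):\varphi(1/s)>0\}$.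 An admissible set of domains on a topological space $Y$ is a set of open subsets containing $Y$ and closed under pairwise intersections. *)

From HB Require Import structures.
From mathcomp Require Import all_boot all_order all_algebra.
From mathcomp Require Import all_classical all_reals.
From mathcomp Require Import topology normedtype Rstruct Rstruct_topology.
Set Implicit Arguments. Unset Strict Implicit. Unset Printing Implicit Defensive.
Import Order.TTheory GRing.Theory Num.Theory.
Local Open Scope ring_scope.
Local Open Scope classical_set_scope.

Notation RR := Rdefinitions.R.

Section POCR.
Variables (R : comPzRingType) (le : R -> R -> Prop).

Definition pocr : Prop :=
  (forall r, le r r) /\
  (forall r s, le r s -> le s r -> r = s) /\
  (forall r s t, le r s -> le s t -> le r t) /\
  (forall r s t, le r s -> le (r + t) (s + t)) /\
  (forall r s, le 0 r -> le 0 s -> le 0 (r * s)) /\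
  (forall r, le 0 (r * r)).

Definition Loc : set R :=
  [set s | le 0 (s - 1) /\ (forall r, le 0 (r * s) -> le 0 r)].

(* Elements of R_loc are represented by pairs (r, s) standing for r/s,
   with s in Loc(R). *)
Definition is_frac (p : R * R) : Prop := Loc p.2.
Definition feq (p q : R * R) : Prop := p.1 * q.2 = q.1 * p.2.
Definition fle (p q : R * R) : Prop := le (p.1 * q.2) (q.1 * p.2).
Definition fadd (p q : R * R) : R * R := (p.1 * q.2 + q.1 * p.2, p.2 * q.2).
Definition fmul (p q : R * R) : R * R := (p.1 * q.1, p.2 * q.2).
Definition fnat (n : nat) : R * R := (n%:R, 1).

Definition bounded (p : R * R) : Prop :=
  is_frac p /\ exists n : nat, fle (- (n%:R), 1) p /\ fle p (fnat n).

(* K(R): positive unital ring morphisms R^bd_loc -> RR, encoded as functions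
   on representatives which respect equality of fractions, and which are
   normalised to 0 on pairs that do not represent an element of R^bd_loc
   (this makes the encoding a bijection with the actual morphisms). *)
Definition Kspace : set (R * R -> RR) :=
  [set phi |
    (forall p, ~ bounded p -> phi p = 0) /\
    (forall p q, bounded p -> bounded q -> feq p q -> phi p = phi q) /\
    phi (1, 1) = 1 /\
    (forall p q, bounded p -> bounded q -> phi (fadd p q) = phi p + phi q) /\
    (forall p q, bounded p -> bounded q -> phi (fmul p q) = phi p * phi q) /\
    (forall p, bounded p -> fle (0, 1) p -> 0 <= phi p)].

(* weak-* topology on K(R): the topology generated by the subbasic sets
   {phi | phi a in V}, a in R^bd_loc, V open in RR. *)
Definition Kopen (U : set (R * R -> RR)) : Prop :=
  U `<=` Kspace /\
  forall phi, U phi ->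
    exists (n : nat) (a : 'I_n -> R * R) (V : 'I_n -> set RR),
      (forall i, bounded (a i) /\ open (V i) /\ V i (phi (a i))) /\
      (forall psi, Kspace psi -> (forall i, V i (psi (a i))) -> U psi).

Definition Ofin (s : R) : set (R * R -> RR) :=
  [set phi | Kspace phi /\ 0 < phi (1, s)].

Definition Dloc : set (set (R * R -> RR)) := [set Ofin s | s in Loc].

End POCR.

Definition admissible (X : Type) (Y : set X) (op : set X -> Prop)
  (D : set (set X)) : Prop :=
  [/\ (forall U, D U -> op U), D Y &
      (forall U V, D U -> D V -> D (U `&` V))].

From HB Require Import structures.
From mathcomp Require Import all_boot all_order all_algebra.
From mathcomp Require Import all_classical all_reals.
From mathcomp Require Import topology normedtype Rstruct Rstruct_topology.
From mathcomp Require Import ring.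
Set Implicit Arguments. Unset Strict Implicit. Unset Printing Implicit Defensive.
Import Order.TTheory GRing.Theory Num.Theory.
Local Open Scope ring_scope.
Local Open Scope classical_set_scope.

(* Every s in Loc(R) satisfies 1 <= s, so 1/s lies in R^bd_loc and phi(1/s) >= 0
   for every phi in K(R).  Since phi is multiplicative,
   phi(1/(qs)) = phi(1/q) phi(1/s), and a product of two nonnegative reals is
   positive iff both factors are.  Loc(R) is closed under products because
   qs - 1 = (q-1)(s-1) + (q-1) + (s-1), and O_{s<oo} is weak-* open, being the
   preimage of the open half-line (0, oo) under evaluation at 1/s. *)

Section LocalizationDomains.
Variables (R : comPzRingType) (le : R -> R -> Prop).
Hypothesis HR : pocr le.

Lemma pocr_refl r : le r r.
Proof. by case: HR. Qed.

Lemma pocr_trans r s t : le r s -> le s t -> le r t.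
Proof. by case: HR => _ [_ [tr _]]; exact: tr. Qed.

Lemma pocr_leD2r r s t : le r s -> le (r + t) (s + t).
Proof. by case: HR => _ [_ [_ [tl _]]]; exact: tl. Qed.

Lemma pocr_mul_ge0 r s : le 0 r -> le 0 s -> le 0 (r * s).
Proof. by case: HR => _ [_ [_ [_ [mp _]]]]; exact: mp. Qed.

Lemma pocr_le01 : le 0 1.
Proof. by case: HR => _ [_ [_ [_ [_ sq]]]]; have := sq 1; rewrite mulr1. Qed.

Lemma pocr_addr_ge0 r s : le 0 r -> le 0 s -> le 0 (r + s).
Proof.
move=> r0 s0; apply: pocr_trans s0 _.
by have := pocr_leD2r s r0; rewrite add0r.
Qed.

Lemma Loc1 : Loc le 1.
Proof. by split; [rewrite subrr; exact: pocr_refl | move=> r; rewrite mulr1]. Qed.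

Lemma LocM q s : Loc le q -> Loc le s -> Loc le (q * s).
Proof.
move=> [q1 Lq] [s1 Ls]; split.
- have -> : q * s - 1 = (q - 1) * (s - 1) + ((q - 1) + (s - 1)) by ring.
  by apply: pocr_addr_ge0; [exact: pocr_mul_ge0 | exact: pocr_addr_ge0].
- by move=> r rqs; apply/Lq/Ls; rewrite -mulrA.
Qed.

Lemma Loc_ge1 s : Loc le s -> le 1 s.
Proof. by move=> [s1 _]; have := pocr_leD2r 1 s1; rewrite add0r subrK. Qed.

Lemma bounded_inv s : Loc le s -> bounded le (1, s).
Proof.
move=> Ls; have s0 : le 0 s := pocr_trans pocr_le01 (Loc_ge1 Ls).
split => //; exists 1%N; rewrite /fle /= mulr1 mul1r; split; last exact: Loc_ge1.
rewrite mulNr mul1r; apply: pocr_trans pocr_le01.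
by have := pocr_leD2r (- s) s0; rewrite add0r subrr.
Qed.

Lemma Kspace_inv_ge0 phi s : Kspace le phi -> Loc le s -> 0 <= phi (1, s).
Proof.
move=> [_ [_ [_ [_ [_ phi_ge0]]]]] Ls; apply: phi_ge0; first exact: bounded_inv.
by rewrite /fle /= mul0r mulr1; exact: pocr_le01.
Qed.

Lemma Kspace_invM phi q s : Kspace le phi -> Loc le q -> Loc le s ->
  phi (1, q * s) = phi (1, q) * phi (1, s).
Proof.
move=> [_ [_ [_ [_ [phiM _]]]]] Lq Ls.
by rewrite -phiM; [rewrite /fmul /= mulr1 | exact: bounded_inv..].
Qed.

Lemma OfinI q s : Loc le q -> Loc le s ->
  Ofin le q `&` Ofin le s = Ofin le (q * s).
Proof.
move=> Lq Ls; apply/seteqP; split => phi /=.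
  by move=> [[K q_gt0] [_ s_gt0]]; split; rewrite ?Kspace_invM ?mulr_gt0.
move=> [K]; rewrite Kspace_invM // => qs_gt0.
have q_ge0 := Kspace_inv_ge0 K Lq; have s_ge0 := Kspace_inv_ge0 K Ls.
split; split; rewrite // lt_def andbC ?q_ge0 ?s_ge0 /=; apply: contraTneq qs_gt0.
  by move->; rewrite mul0r ltxx.
by move->; rewrite mulr0 ltxx.
Qed.

Lemma Ofin1 : Ofin le 1 = Kspace le.
Proof.
apply/seteqP; split => phi /=; first by case.
by move=> K; split => //; case: K => _ [_ [-> _]]; exact: ltr01.
Qed.

Lemma Kopen_Ofin s : Loc le s -> Kopen le (Ofin le s).
Proof.
move=> Ls; split; first by move=> phi [].
move=> phi [_ phi_gt0].
exists 1%N, (fun=> (1, s)), (fun=> [set x : RR | 0 < x]); split.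
  by move=> _; split; [exact: bounded_inv | split; [exact: open_gt |]].
by move=> psi Kpsi /(_ ord0).
Qed.

End LocalizationDomains.

Theorem proposition23 (R : comPzRingType) (le : R -> R -> Prop) (HR : pocr le) :
  (forall q s, Loc le q -> Loc le s ->
     Ofin le q `&` Ofin le s = Ofin le (q * s)) /\
  Ofin le 1 = Kspace le /\
  admissible (Kspace le) (Kopen le) (Dloc le).
Proof.
split; first exact: OfinI.
split; first exact: Ofin1.
split.
- by move=> _ [s Ls <-]; exact: Kopen_Ofin.
- by exists 1; [exact: Loc1 | exact: Ofin1].
- move=> _ _ [q Lq <-] [s Ls <-].
  by exists (q * s); [exact: LocM | rewrite OfinI].
Qed.
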